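(* Let $0\le\gamma_2\le\gamma_1\le\frac\pi2$ with $\gamma_1+\gamma_2\le\frac\pi2$ and $-1\le x_3\le1$, and let $\rho=\frac12(\Sigma_0+x_3\Sigma_3)$. Define $$x_3^{(3,4)}:=\frac{-\sin\gamma_1\{\pm\sin\gamma_1+[\cos\gamma_1\cos\gamma_2+\sin^2\gamma_1]\sin\gamma_2\}}{1+\cos\gamma_1\{\cos\gamma_2-\sin\gamma_2[\cos\gamma_1\sin\gamma_2+\sin^2\gamma_1\tan\gamma_2]\}},$$ with the upper sign ($+$) giving $x_3^{(3)}$ and the lower sign ($-$) giving $x_3^{(4)}$. Then $-1\le x_3^{(3)}\le 0\le x_3^{(4)}\le 1$ and $$g(\rho)=\begin{cases}\frac{(1-x_3)[1+\cos(\gamma_1+\gamma_2)]}{4}, & -1\le x_3\le x_3^{(3)},\\[1ex] \dfrac{(1-x_3^2)\sin\gamma_1\cos\gamma_2(\cos\gamma_2\sin\gamma_1-x_3\cos\gamma_1\sin\gamma_2)}{-2\big[x_3^2-(\cos\gamma_2\sin\gamma_1-x_3\cos\gamma_1\sin\gamma_2)^2\big]}, & x_3^{(3)}<x_3<x_3^{(4)},\\[1ex] \frac{(1+x_3)[1+\cos(\gamma_1-\gamma_2)]}{4}, & x_3^{(4)}\le x_3\le1.\end{cases}$$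
   Context: On two qubits, let $\sigma_1,\sigma_2,\sigma_3$ denote the Pauli matrices acting on the first qubit and $\tau_1,\tau_2,\tau_3$ those acting on the second qubit (tensor products with the identity understood). For parameters $\gamma_1,\gamma_2$ set $u=\cos\gamma_1\cos\gamma_2$, $v=\sin\gamma_1\sin\gamma_2$, $z_1=\sin\gamma_1\cos\gamma_2$, $z_2=\cos\gamma_1\sin\gamma_2$, and define the operators $\Sigma_0=\frac12(I+u\sigma_3+v\tau_3+z_1\sigma_1\tau_1+z_2\sigma_2\tau_2)$ (a rank-two projector) and $\Sigma_3=\frac12(v\sigma_3+u\tau_3-z_2\sigma_1\tau_1-z_1\sigma_2\tau_2+\sigma_3\tau_3)$. For a two-qubit density matrix $\rho$, $g(\rho):=\max\operatorname{tr}[\rho(\rho_1\otimes\rho_2)]$, the maximum over all pure single-qubit states $\rho_1,\rho_2$. *)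

From Stdlib Require Import Reals Lra.
Open Scope R_scope.

Definition C : Type := (R * R)%type.
Definition Cre (z : C) : R := fst z.
Definition Cim (z : C) : R := snd z.
Definition RtoC (r : R) : C := (r, 0).
Definition C0 : C := (0, 0).
Definition C1 : C := (1, 0).
Definition Ci : C := (0, 1).
Definition Cadd (a b : C) : C := (fst a + fst b, snd a + snd b).
Definition Cmul (a b : C) : C :=
  (fst a * fst b - snd a * snd b, fst a * snd b + snd a * fst b).
Definition Copp (a : C) : C := (- fst a, - snd a).
Definition Cconj (a : C) : C := (fst a, - snd a).
Definition Cnorm2 (a : C) : R := fst a * fst a + snd a * snd a.

Fixpoint Csum (n : nat) (f : nat -> C) : C :=
  match n with
  | O => C0
  | S m => Cadd (Csum m f) (f m)
  end.

(* ---------- matrices: entries indexed from 0; only indices < dim matter ---------- *)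
Definition Mat : Type := nat -> nat -> C.
Definition madd (A B : Mat) : Mat := fun i j => Cadd (A i j) (B i j).
Definition mscale (r : R) (A : Mat) : Mat := fun i j => Cmul (RtoC r) (A i j).
Definition mmul (n : nat) (A B : Mat) : Mat :=
  fun i j => Csum n (fun k => Cmul (A i k) (B k j)).
Definition mtrace (n : nat) (A : Mat) : C := Csum n (fun i => A i i).
(* Kronecker product of two 2x2 matrices; index i of C^4 = 2*a + b,
   a the first-qubit index, b the second-qubit index. *)
Definition kron2 (A B : Mat) : Mat :=
  fun i j => Cmul (A (Nat.div i 2) (Nat.div j 2)) (B (Nat.modulo i 2) (Nat.modulo j 2)).

Definition mat2 (a b c d : C) : Mat :=
  fun i j => match i, j with
             | 0%nat, 0%nat => a | 0%nat, 1%nat => b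
             | 1%nat, 0%nat => c | 1%nat, 1%nat => d
             | _, _ => C0 end.
Definition I2 : Mat := mat2 C1 C0 C0 C1.
Definition pauli1 : Mat := mat2 C0 C1 C1 C0.
Definition pauli2 : Mat := mat2 C0 (Copp Ci) Ci C0.
Definition pauli3 : Mat := mat2 C1 C0 C0 (Copp C1).
Definition I4 : Mat := kron2 I2 I2.

Definition sig (P : Mat) : Mat := kron2 P I2.
Definition tau (P : Mat) : Mat := kron2 I2 P.

Definition uu (g1 g2 : R) := cos g1 * cos g2.
Definition vv (g1 g2 : R) := sin g1 * sin g2.
Definition zz1 (g1 g2 : R) := sin g1 * cos g2.
Definition zz2 (g1 g2 : R) := cos g1 * sin g2.

Definition Sigma0 (g1 g2 : R) : Mat :=
  mscale (1/2)
    (madd I4 (madd (mscale (uu g1 g2) (sig pauli3))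
      (madd (mscale (vv g1 g2) (tau pauli3))
        (madd (mscale (zz1 g1 g2) (kron2 pauli1 pauli1))
              (mscale (zz2 g1 g2) (kron2 pauli2 pauli2)))))).

Definition Sigma3 (g1 g2 : R) : Mat :=
  mscale (1/2)
    (madd (mscale (vv g1 g2) (sig pauli3))
      (madd (mscale (uu g1 g2) (tau pauli3))
        (madd (mscale (- zz2 g1 g2) (kron2 pauli1 pauli1))
          (madd (mscale (- zz1 g1 g2) (kron2 pauli2 pauli2))
                (kron2 pauli3 pauli3))))).

Definition rho (g1 g2 x3 : R) : Mat :=
  mscale (1/2) (madd (Sigma0 g1 g2) (mscale x3 (Sigma3 g1 g2))).

Definition unit2 (psi : nat -> C) : Prop := Cnorm2 (psi 0%nat) + Cnorm2 (psi 1%nat) = 1.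
Definition proj (psi : nat -> C) : Mat := fun i j => Cmul (psi i) (Cconj (psi j)).

Definition overlap (r : Mat) (psi phi : nat -> C) : C :=
  mtrace 4 (mmul 4 r (kron2 (proj psi) (proj phi))).

(* g(r) = m : m is the maximum of tr[r (rho1 (x) rho2)] over pure rho1, rho2
   (the trace is real for Hermitian r; we require it real at the maximizer). *)
Definition g_is (r : Mat) (m : R) : Prop :=
  (forall psi phi, unit2 psi -> unit2 phi -> Cre (overlap r psi phi) <= m) /\
  (exists psi phi, unit2 psi /\ unit2 phi /\ overlap r psi phi = RtoC m).

Definition x3_34 (s g1 g2 : R) : R :=
  (- sin g1 * (s * sin g1 + (cos g1 * cos g2 + sin g1 ^ 2) * sin g2)) /
  (1 + cos g1 * (cos g2 - sin g2 * (cos g1 * sin g2 + sin g1 ^ 2 * tan g2))).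
Definition x3_3 (g1 g2 : R) : R := x3_34 1 g1 g2.
Definition x3_4 (g1 g2 : R) : R := x3_34 (-1) g1 g2.

Definition g_formula (g1 g2 x3 : R) : R :=
  if Rle_dec x3 (x3_3 g1 g2) then (1 - x3) * (1 + cos (g1 + g2)) / 4
  else if Rlt_dec x3 (x3_4 g1 g2) then
    ((1 - x3 ^ 2) * sin g1 * cos g2 * (cos g2 * sin g1 - x3 * cos g1 * sin g2)) /
    (-2 * (x3 ^ 2 - (cos g2 * sin g1 - x3 * cos g1 * sin g2) ^ 2))
  else (1 + x3) * (1 + cos (g1 - g2)) / 4.

From Pilot Require Import Defs.
From Stdlib Require Import Reals Lra Nsatz.
Open Scope R_scope.

(* For unit vectors psi, phi with Bloch vectors (a, a1, a2) and
      (b, b1, b2), tr[rho (|psi><psi| (x) |phi><phi|)] = (1 + F)/4 where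
      F = r a + s b + x a b + c a1 b1 + t a2 b2 with r = u + x v, s = v + x u,
      c = z1 - x z2, t = z2 - x z1.  Since t^2 <= c^2, Cauchy-Schwarz in b reduces the
      maximisation of F to the one-variable bound
         sqrt((s + x a)^2 + c^2 (1 - a^2)) <= M - r a   for all a in [-1, 1],
      and M is the maximum of F as soon as it is attained (by real states).
   2. Generic certificates for that bound: a "corner" certificate (maximum at a = 1,
      b = +-1) and a "tangent" certificate (the bound is tight at one interior a0).
   3. Trigonometry-free algebra in s_i = sin g_i, c_i = cos g_i: the thresholds
      x3_3 = -num3/den and x3_4 = num4/den, and polynomial identities (modulo
      s_i^2 + c_i^2 = 1) factoring the relevant gaps, which show that the corner
      certificates hold below x3_3 and above x3_4 and the tangent one in between.
   4. The three regimes of g(rho), from which the main theorem follows by case analysis. *)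

Definition bloch_n (psi : nat -> Defs.C) : R := Cnorm2 (psi 0%nat) + Cnorm2 (psi 1%nat).
Definition bloch_z (psi : nat -> Defs.C) : R := Cnorm2 (psi 0%nat) - Cnorm2 (psi 1%nat).
Definition bloch_x (psi : nat -> Defs.C) : R :=
  2 * (Cre (psi 0%nat) * Cre (psi 1%nat) + Cim (psi 0%nat) * Cim (psi 1%nat)).
Definition bloch_y (psi : nat -> Defs.C) : R :=
  2 * (Cre (psi 0%nat) * Cim (psi 1%nat) - Cim (psi 0%nat) * Cre (psi 1%nat)).

Lemma bloch_sphere (psi : nat -> Defs.C) :
  unit2 psi -> bloch_z psi * bloch_z psi + bloch_x psi * bloch_x psi + bloch_y psi * bloch_y psi = 1.
Proof.
  unfold unit2. intros Hpsi.
  transitivity (bloch_n psi * bloch_n psi).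
  - unfold bloch_n, bloch_z, bloch_x, bloch_y, Cnorm2, Cre, Cim. ring.
  - unfold bloch_n. rewrite Hpsi. ring.
Qed.

Definition coef_r (g1 g2 x : R) : R := uu g1 g2 + x * vv g1 g2.
Definition coef_s (g1 g2 x : R) : R := vv g1 g2 + x * uu g1 g2.
Definition coef_c (g1 g2 x : R) : R := zz1 g1 g2 - x * zz2 g1 g2.
Definition coef_t (g1 g2 x : R) : R := zz2 g1 g2 - x * zz1 g1 g2.

Definition bform (r s x c t a a1 a2 b b1 b2 : R) : R :=
  r * a + s * b + x * a * b + c * a1 * b1 + t * a2 * b2.

Lemma overlap_rho_re (g1 g2 x : R) (psi phi : nat -> Defs.C) :
  unit2 psi -> unit2 phi ->
  Cre (overlap (rho g1 g2 x) psi phi) =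
  (1 + bform (coef_r g1 g2 x) (coef_s g1 g2 x) x (coef_c g1 g2 x) (coef_t g1 g2 x)
         (bloch_z psi) (bloch_x psi) (bloch_y psi) (bloch_z phi) (bloch_x phi) (bloch_y phi)) / 4.
Proof.
  intros Hpsi Hphi.
  assert (Hgen : Cre (overlap (rho g1 g2 x) psi phi) =
    (bloch_n psi * bloch_n phi + coef_r g1 g2 x * bloch_z psi * bloch_n phi
     + coef_s g1 g2 x * bloch_n psi * bloch_z phi + x * bloch_z psi * bloch_z phi
     + coef_c g1 g2 x * bloch_x psi * bloch_x phi + coef_t g1 g2 x * bloch_y psi * bloch_y phi) / 4).
  { unfold overlap, rho, Sigma0, Sigma3, mtrace, mmul, kron2, proj, madd, mscale, sig, tau,
      I4, I2, pauli1, pauli2, pauli3, mat2, bloch_n, bloch_z, bloch_x, bloch_y,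
      coef_r, coef_s, coef_c, coef_t; cbn.
    destruct (psi 0%nat), (psi 1%nat), (phi 0%nat), (phi 1%nat).
    unfold Cre, Cim, Cnorm2, Cadd, Cmul, RtoC, Cconj, Copp, C0, C1, Ci; cbn.
    field. }
  unfold unit2 in Hpsi, Hphi. fold (bloch_n psi) in Hpsi. fold (bloch_n phi) in Hphi.
  rewrite Hgen, Hpsi, Hphi. unfold bform. field.
Qed.

(* Real states (p0, p1); they suffice to attain the maximum. *)
Definition real_state (p0 p1 : R) : nat -> Defs.C :=
  fun n => match n with 0%nat => (p0, 0) | _ => (p1, 0) end.

Lemma overlap_rho_im_real (g1 g2 x p0 p1 q0 q1 : R) :
  Cim (overlap (rho g1 g2 x) (real_state p0 p1) (real_state q0 q1)) = 0.
Proof.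
  unfold overlap, rho, Sigma0, Sigma3, mtrace, mmul, kron2, proj, madd, mscale, sig, tau,
    I4, I2, pauli1, pauli2, pauli3, mat2, real_state; cbn.
  unfold Cim, Cadd, Cmul, RtoC, Cconj, Copp, C0, C1, Ci; cbn.
  field.
Qed.

Lemma real_state_of_bloch (a a1 : R) :
  a * a + a1 * a1 = 1 -> 0 <= a1 ->
  exists p0 p1, unit2 (real_state p0 p1) /\ bloch_z (real_state p0 p1) = a /\
    bloch_x (real_state p0 p1) = a1 /\ bloch_y (real_state p0 p1) = 0.
Proof.
  intros Hn Ha1.
  assert (Ha : -1 <= a <= 1) by (split; nra).
  set (p0 := sqrt ((1 + a) / 2)). set (p1 := sqrt ((1 - a) / 2)).
  assert (E0 : p0 * p0 = (1 + a) / 2) by (apply sqrt_sqrt; lra).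
  assert (E1 : p1 * p1 = (1 - a) / 2) by (apply sqrt_sqrt; lra).
  assert (Hp : 0 <= p0 * p1) by (apply Rmult_le_pos; apply sqrt_pos).
  exists p0, p1.
  unfold unit2, bloch_z, bloch_x, bloch_y, real_state, Cnorm2, Cre, Cim; cbn.
  split; [lra|]. split; [lra|]. split; [|ring].
  assert (Hsq : (2 * (p0 * p1)) * (2 * (p0 * p1)) = a1 * a1).
  { replace ((2 * (p0 * p1)) * (2 * (p0 * p1))) with (4 * (p0 * p0) * (p1 * p1)) by ring.
    rewrite E0, E1. lra. }
  rewrite Rmult_0_r, !Rplus_0_r. nra.
Qed.

(* The one-variable certificate that M bounds F: for each a, the maximum over b of the
   b-dependent part of F, sqrt((s + x a)^2 + c^2 (1 - a^2)), is at most M - r a. *)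
Definition upper_cert (r s x c M : R) : Prop :=
  forall a, -1 <= a <= 1 ->
    0 <= M - r * a /\ (s + x * a) * (s + x * a) + c * c * (1 - a * a) <= (M - r * a) * (M - r * a).

Definition attained (r s x c M : R) : Prop :=
  exists a a1 b b1, 0 <= a1 /\ 0 <= b1 /\ a * a + a1 * a1 = 1 /\ b * b + b1 * b1 = 1 /\
    r * a + s * b + x * a * b + c * a1 * b1 = M.

(* Cauchy-Schwarz in b (via Lagrange's identity) together with t^2 <= c^2. *)
Lemma bform_le (r s x c t M a a1 a2 b b1 b2 : R) :
  a * a + a1 * a1 + a2 * a2 = 1 -> b * b + b1 * b1 + b2 * b2 = 1 ->
  t * t <= c * c -> upper_cert r s x c M ->
  bform r s x c t a a1 a2 b b1 b2 <= M.
Proof.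
  intros Ha Hb Ht Hcert.
  destruct (Hcert a) as [HM HQ]; [split; nra|].
  set (w0 := s + x * a). set (w1 := c * a1). set (w2 := t * a2).
  set (dot := w0 * b + w1 * b1 + w2 * b2).
  assert (Lagrange : (w0 * w0 + w1 * w1 + w2 * w2) * (b * b + b1 * b1 + b2 * b2) - dot * dot =
    (w0 * b1 - w1 * b) * (w0 * b1 - w1 * b) + (w0 * b2 - w2 * b) * (w0 * b2 - w2 * b)
    + (w1 * b2 - w2 * b1) * (w1 * b2 - w2 * b1)) by (unfold dot; ring).
  assert (Hw2 : w2 * w2 <= c * c * (a2 * a2)).
  { unfold w2. replace (t * a2 * (t * a2)) with (t * t * (a2 * a2)) by ring.
    apply Rmult_le_compat_r; [nra | exact Ht]. }
  assert (Hw : w0 * w0 + w1 * w1 + w2 * w2 <= (M - r * a) * (M - r * a)).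
  { unfold w0, w1. replace (1 - a * a) with (a1 * a1 + a2 * a2) in HQ by lra. nra. }
  assert (Hdot : dot * dot <= w0 * w0 + w1 * w1 + w2 * w2).
  { rewrite Hb, Rmult_1_r in Lagrange.
    pose proof (Rle_0_sqr (w0 * b1 - w1 * b)). pose proof (Rle_0_sqr (w0 * b2 - w2 * b)).
    pose proof (Rle_0_sqr (w1 * b2 - w2 * b1)). unfold Rsqr in *. lra. }
  assert (dot <= M - r * a) by nra.
  unfold bform, dot, w0, w1, w2 in *. nra.
Qed.

Theorem g_is_criterion (g1 g2 x M : R) :
  coef_t g1 g2 x * coef_t g1 g2 x <= coef_c g1 g2 x * coef_c g1 g2 x ->
  upper_cert (coef_r g1 g2 x) (coef_s g1 g2 x) x (coef_c g1 g2 x) M ->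
  attained (coef_r g1 g2 x) (coef_s g1 g2 x) x (coef_c g1 g2 x) M ->
  g_is (rho g1 g2 x) ((1 + M) / 4).
Proof.
  intros Ht Hcert Hatt. split.
  - intros psi phi Hpsi Hphi.
    rewrite (overlap_rho_re g1 g2 x psi phi Hpsi Hphi).
    pose proof (bform_le _ _ _ _ _ M _ _ _ _ _ _ (bloch_sphere psi Hpsi) (bloch_sphere phi Hphi) Ht Hcert).
    lra.
  - destruct Hatt as (a & a1 & b & b1 & Ha1 & Hb1 & Ha & Hb & Hval).
    destruct (real_state_of_bloch a a1 Ha Ha1) as (p0 & p1 & Hp & Hpz & Hpx & Hpy).
    destruct (real_state_of_bloch b b1 Hb Hb1) as (q0 & q1 & Hq & Hqz & Hqx & Hqy).
    exists (real_state p0 p1), (real_state q0 q1). split; [exact Hp|]. split; [exact Hq|].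
    pose proof (overlap_rho_re g1 g2 x _ _ Hp Hq) as Hre.
    pose proof (overlap_rho_im_real g1 g2 x p0 p1 q0 q1) as Him.
    rewrite Hpz, Hpx, Hpy, Hqz, Hqx, Hqy in Hre.
    replace ((1 + M) / 4) with (Cre (overlap (rho g1 g2 x) (real_state p0 p1) (real_state q0 q1)))
      by (rewrite Hre, <- Hval; unfold bform; rewrite Rmult_0_r, Rplus_0_r; reflexivity).
    unfold RtoC. rewrite <- Him. unfold Cre, Cim. apply surjective_pairing.
Qed.

Lemma nonneg_of_scaled (k d : R) : 0 < k -> 0 <= k * d -> 0 <= d.
Proof. intros Hk Hkd. nra. Qed.

(* Corner certificate: the maximum sits at a = 1, b = 1, with value r + s + x.  The gap
   (M - r a)^2 - (s + x a)^2 - c^2 (1 - a^2) factors as (1 - a) times a nonnegative term. *)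
Lemma upper_cert_corner (r s x c : R) :
  0 <= r -> 0 <= s + x -> c * c <= (r + x) * (s + x) -> x * x <= r * r + c * c ->
  upper_cert r s x c (r + s + x).
Proof.
  intros Hr Hsx Hgap Hrc a Ha. split; [nra|].
  assert (Gap : (r + s + x - r * a) * (r + s + x - r * a)
                - ((s + x * a) * (s + x * a) + c * c * (1 - a * a))
              = (1 - a) * (2 * ((r + x) * (s + x) - c * c) + (r * r + c * c - x * x) * (1 - a)))
    by ring.
  assert (0 <= (r * r + c * c - x * x) * (1 - a)) by (apply Rmult_le_pos; lra).
  assert (0 <= (1 - a) * (2 * ((r + x) * (s + x) - c * c) + (r * r + c * c - x * x) * (1 - a)))
    by (apply Rmult_le_pos; lra).
  lra.
Qed.

(* The bound only depends on (s, x) up to a common sign; this turns the corner at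
   b = 1 into the corner at b = -1. *)
Lemma upper_cert_reflect (r s x c M : R) :
  upper_cert r (- s) (- x) c M -> upper_cert r s x c M.
Proof.
  intros H a Ha. destruct (H a Ha) as [H1 H2]. split; [exact H1|].
  replace ((s + x * a) * (s + x * a)) with ((- s + - x * a) * (- s + - x * a)) by ring.
  exact H2.
Qed.

Lemma attained_corners (r s x c : R) :
  attained r s x c (r + s + x) /\ attained r s x c (r - s - x).
Proof.
  split; [exists 1, 0, 1, 0 | exists 1, 0, (-1), 0]; repeat split; lra.
Qed.

(* Tangent certificate: if the squared bound holds everywhere and M - r a0 > 0 at some
   a0 in [-1, 1], then M - r a >= 0 on [-1, 1], since a zero of the affine map
   a |-> M - r a inside (-1, 1) would contradict (s + x a)^2 + c^2 (1 - a^2) > 0. *)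
Lemma upper_cert_tangent (r s x c M a0 : R) :
  c <> 0 -> -1 <= a0 <= 1 -> 0 < M - r * a0 ->
  (forall a, (s + x * a) * (s + x * a) + c * c * (1 - a * a) <= (M - r * a) * (M - r * a)) ->
  upper_cert r s x c M.
Proof.
  intros Hc Ha0 HM Hsq a Ha. split; [|apply Hsq].
  destruct (Rle_lt_dec 0 (M - r * a)) as [Hpos | Hneg]; [exact Hpos | exfalso].
  assert (Hr : r <> 0) by (intro Z; rewrite Z in *; lra).
  set (y := M / r).
  assert (Ey : r * y = M) by (unfold y; field; exact Hr).
  assert (Hy : -1 < y < 1).
  { destruct (Rlt_dec 0 r); [split; nra | assert (r < 0) by lra; split; nra]. }
  specialize (Hsq y). rewrite Ey, Rminus_diag, Rmult_0_r in Hsq.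
  assert (0 < c * c) by (apply Rlt_0_sqr in Hc; exact Hc).
  assert (0 < 1 - y * y) by nra.
  assert (0 < c * c * (1 - y * y)) by (apply Rmult_lt_0_compat; lra).
  pose proof (Rle_0_sqr (s + x * y)). unfold Rsqr in *. lra.
Qed.

(* If the bound is tight at a0, it is attained there: take b proportional to
   (s + x a0, c sqrt(1 - a0^2)). *)
Lemma attained_tangent (r s x c M a0 : R) :
  0 <= c -> -1 <= a0 <= 1 -> 0 < M - r * a0 ->
  (s + x * a0) * (s + x * a0) + c * c * (1 - a0 * a0) = (M - r * a0) * (M - r * a0) ->
  attained r s x c M.
Proof.
  intros Hc Ha0 HM Hsq.
  set (d := M - r * a0) in *.
  set (a1 := sqrt (1 - a0 * a0)).
  assert (Ea1 : a1 * a1 = 1 - a0 * a0) by (apply sqrt_sqrt; nra).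
  exists a0, a1, ((s + x * a0) / d), (c * a1 / d).
  split; [apply sqrt_pos|]. split.
  { unfold Rdiv. apply Rmult_le_pos; [apply Rmult_le_pos; [lra | apply sqrt_pos] |].
    apply Rlt_le, Rinv_0_lt_compat; lra. }
  split; [lra|]. split.
  - replace ((s + x * a0) / d * ((s + x * a0) / d) + c * a1 / d * (c * a1 / d))
      with (((s + x * a0) * (s + x * a0) + c * c * (a1 * a1)) / (d * d)) by (field; lra).
    rewrite Ea1, Hsq. field. lra.
  - replace (r * a0 + s * ((s + x * a0) / d) + x * a0 * ((s + x * a0) / d) + c * a1 * (c * a1 / d))
      with (r * a0 + ((s + x * a0) * (s + x * a0) + c * c * (a1 * a1)) / d) by (field; lra).
    rewrite Ea1, Hsq. replace (d * d / d) with d by (field; lra). unfold d. ring.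
Qed.

(* The constraints on s_i = sin g_i, c_i = cos g_i implied by 0 <= g2 <= g1 and
   g1 + g2 <= pi/2. *)
Record angles (s1 c1 s2 c2 : R) : Prop := {
  circle1 : s1 * s1 + c1 * c1 = 1;
  circle2 : s2 * s2 + c2 * c2 = 1;
  s1_nn : 0 <= s1;
  c1_nn : 0 <= c1;
  s2_nn : 0 <= s2;
  c2_pos : 0 < c2;
  s2_le_s1 : s2 <= s1;
  c1_le_c2 : c1 <= c2;
  s1_le_c2 : s1 <= c2;
  s2_le_c1 : s2 <= c1 }.

Section AngleAlgebra.

Variables s1 c1 s2 c2 : R.

Hypothesis HA : angles s1 c1 s2 c2.

(* den, -num3 and num4 are c2 times the denominator and numerators of x3_3, x3_4. *)
Definition den : R := c2 + c1 * c2 * c2 - c1 * s2 * s2 * (c1 * c2 + s1 * s1).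
Definition num3 : R := s1 * c2 * (s1 + (c1 * c2 + s1 * s1) * s2).
Definition num4 : R := s1 * c2 * (s1 - (c1 * c2 + s1 * s1) * s2).

Definition rr (x : R) : R := c1 * c2 + x * (s1 * s2).
Definition ss (x : R) : R := s1 * s2 + x * (c1 * c2).
Definition cc (x : R) : R := s1 * c2 - x * (c1 * s2).
Definition tt (x : R) : R := c1 * s2 - x * (s1 * c2).

(* Middle regime: kk, mm, nn describe the interior maximiser a* = mm / (kk c2) and the
   maximum nn / kk. *)
Definition kk (x : R) : R := cc x * cc x - x * x.
Definition mm (x : R) : R := ss x * x * c2 + rr x * cc x * s1.
Definition nn (x : R) : R := rr x * ss x * x + cc x * s1 * c2 * (1 - x * x).

Ltac circle_nsatz := pose proof (circle1 _ _ _ _ HA); pose proof (circle2 _ _ _ _ HA);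
  unfold den, num3, num4, kk, mm, nn, rr, ss, cc; nsatz.

(* Elementary consequences: all s_i, c_i are at most 1 (s2 < 1 since c2 > 0), and
   sin(g1 - g2) = s1 c2 - c1 s2 and cos(g1 + g2) = c1 c2 - s1 s2 are nonnegative. *)
Lemma angles_bounds :
  s1 <= 1 /\ c1 <= 1 /\ s2 < 1 /\ c2 <= 1 /\ 0 <= s1 * c2 - c1 * s2 /\ 0 <= c1 * c2 - s1 * s2.
Proof.
  destruct HA as [E1 E2 Hs1 Hc1 Hs2 Hc2 Hs21 Hc12 Hs1c2 Hs2c1].
  repeat split; nra.
Qed.

Lemma sum_angle_norm :
  (c1 * s2 + s1 * c2) * (c1 * s2 + s1 * c2) + (c1 * c2 - s1 * s2) * (c1 * c2 - s1 * s2) = 1.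
Proof. circle_nsatz. Qed.

Lemma diff_angle_norm :
  (c1 * c2 + s1 * s2) * (c1 * c2 + s1 * s2) + (s1 * c2 - c1 * s2) * (s1 * c2 - c1 * s2) = 1.
Proof. circle_nsatz. Qed.

Lemma den_pos : 0 < den.
Proof.
  pose proof angles_bounds as (Hs1' & Hc1' & Hs2' & Hc2' & _).
  destruct HA as [E1 E2 Hs1 Hc1 Hs2 Hc2 Hs21 Hc12 Hs1c2 Hs2c1]. unfold den.
  assert (c1 * (c1 * c2 + s1 * s1) <= 1) by nra.
  assert (c1 * s2 * s2 * (c1 * c2 + s1 * s1) <= s2 * s2) by nra.
  assert (s2 * s2 <= s2 * c2) by nra.
  nra.
Qed.

Lemma num3_nn : 0 <= num3.
Proof.
  destruct HA as [E1 E2 Hs1 Hc1 Hs2 Hc2 Hs21 Hc12 Hs1c2 Hs2c1]. unfold num3.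
  assert (0 <= c1 * c2 + s1 * s1) by nra.
  assert (0 <= s1 * c2) by nra.
  apply Rmult_le_pos; nra.
Qed.

Lemma num4_le_num3 : num4 <= num3.
Proof.
  destruct HA as [E1 E2 Hs1 Hc1 Hs2 Hc2 Hs21 Hc12 Hs1c2 Hs2c1]. unfold num3, num4.
  assert (0 <= c1 * c2 + s1 * s1) by nra.
  assert (0 <= s1 * c2 * (c1 * c2 + s1 * s1) * s2) by (repeat apply Rmult_le_pos; nra).
  nra.
Qed.

Lemma den_minus_num3 :
  den - num3 = c1 * c1 * c2 + c1 * c2 * c2 - (c1 * c2 + s1 * s1) * s2 * (c1 * s2 + s1 * c2).
Proof. circle_nsatz. Qed.

Lemma num3_le_den : num3 <= den.
Proof.
  pose proof angles_bounds as (Hs1' & Hc1' & Hs2' & Hc2' & Hd & He).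
  pose proof sum_angle_norm as Hsum. pose proof den_minus_num3 as E.
  destruct HA as [E1 E2 Hs1 Hc1 Hs2 Hc2 Hs21 Hc12 Hs1c2 Hs2c1].
  assert (Ht : c1 * s2 + s1 * c2 <= 1) by nra.
  assert (0 <= (c1 * c2 + s1 * s1) * s2) by nra.
  assert ((c1 * c2 + s1 * s1) * s2 * (c1 * s2 + s1 * c2) <= (c1 * c2 + s1 * s1) * s2) by nra.
  assert (c1 * c2 * s2 <= c1 * c2 * c1) by nra.
  assert (s1 * s1 * s2 <= c2 * c2 * c1) by (apply Rmult_le_compat; nra).
  lra.
Qed.

Lemma num4_factor :
  (s1 + s2) * (s1 - (c1 * c2 + s1 * s1) * s2)
  = (s1 * c2 - c1 * s2) * ((s1 + s2) * c2 - s1 * s2 * (c1 * s2 + s1 * c2)).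
Proof. circle_nsatz. Qed.

Lemma num4_nn : 0 <= num4.
Proof.
  pose proof angles_bounds as (Hs1' & Hc1' & Hs2' & Hc2' & Hd & He).
  pose proof sum_angle_norm as Hsum. pose proof num4_factor as E.
  destruct HA as [E1 E2 Hs1 Hc1 Hs2 Hc2 Hs21 Hc12 Hs1c2 Hs2c1]. unfold num4.
  assert (Ht : c1 * s2 + s1 * c2 <= 1) by nra.
  destruct (Req_dec s1 0) as [Z | Z]; [rewrite Z; lra|].
  assert (s1 * s2 * (c1 * s2 + s1 * c2) <= s1 * s2) by (assert (0 <= s1 * s2) by nra; nra).
  assert (0 <= (s1 + s2) * (s1 - (c1 * c2 + s1 * s1) * s2))
    by (rewrite E; apply Rmult_le_pos; nra).
  assert (0 <= s1 - (c1 * c2 + s1 * s1) * s2) by nra.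
  apply Rmult_le_pos; nra.
Qed.

(* |t| <= |c|, which lets Cauchy-Schwarz absorb the a2 b2 term. *)
Lemma tt_sq_le (x : R) : -1 <= x <= 1 -> tt x * tt x <= cc x * cc x.
Proof.
  intros Hx. pose proof angles_bounds as (_ & _ & _ & _ & Hd & _).
  destruct HA as [E1 E2 Hs1 Hc1 Hs2 Hc2 Hs21 Hc12 Hs1c2 Hs2c1].
  assert (E : cc x * cc x - tt x * tt x = (s1 * c2 - c1 * s2) * (s1 * c2 + c1 * s2) * (1 - x * x))
    by (unfold cc, tt; ring).
  assert (0 <= 1 - x * x) by nra.
  assert (0 <= s1 * c2 + c1 * s2) by nra.
  assert (0 <= (s1 * c2 - c1 * s2) * (s1 * c2 + c1 * s2) * (1 - x * x))
    by (repeat apply Rmult_le_pos; lra).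
  lra.
Qed.

(* r^2 + c^2 - x^2 = c2^2 (1 - x^2) >= 0, needed by the corner certificate. *)
Lemma coef_norm (x : R) : rr x * rr x + cc x * cc x = c2 * c2 + x * x * (s2 * s2).
Proof. circle_nsatz. Qed.

Lemma x_sq_le_coef_norm (x : R) : -1 <= x <= 1 -> x * x <= rr x * rr x + cc x * cc x.
Proof.
  intros Hx. rewrite coef_norm.
  destruct HA as [E1 E2 Hs1 Hc1 Hs2 Hc2 Hs21 Hc12 Hs1c2 Hs2c1].
  assert (x * x <= 1) by nra. nra.
Qed.

(* The corner gap (r + x)(s + x) - c^2 is a quadratic in x vanishing at x3_4. *)
Lemma up_gap_factor (x : R) :
  den * den * ((rr x + x) * (ss x + x) - cc x * cc x)
  = (den * x - num4)
    * (((1 + c1 * c2) * (1 + s1 * s2) - c1 * s2 * (c1 * s2)) * (den * x + num4)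
       + (c1 * c2 + s1 * s2) * (c1 * c2 + s1 * s2 + 1) * den).
Proof. circle_nsatz. Qed.

Lemma up_cert (x : R) :
  x <= 1 -> num4 <= den * x -> upper_cert (rr x) (ss x) x (cc x) (rr x + ss x + x).
Proof.
  intros Hx1 Hx.
  pose proof den_pos as Hden. pose proof num4_nn as H4.
  pose proof angles_bounds as (Hs1' & Hc1' & Hs2' & Hc2' & Hd & He).
  pose proof (up_gap_factor x) as Factor.
  assert (Hx0 : 0 <= x) by (clear - Hden H4 Hx; nra).
  destruct HA as [E1 E2 Hs1 Hc1 Hs2 Hc2 Hs21 Hc12 Hs1c2 Hs2c1].
  assert (0 <= c1 * c2) by (apply Rmult_le_pos; lra).
  assert (0 <= s1 * s2) by (apply Rmult_le_pos; lra).
  assert (0 <= rr x) by (unfold rr; nra).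
  assert (0 <= ss x) by (unfold ss; nra).
  apply upper_cert_corner; [lra | lra | | apply x_sq_le_coef_norm; lra].
  set (l4 := (1 + c1 * c2) * (1 + s1 * s2) - c1 * s2 * (c1 * s2)) in Factor.
  set (b4 := (c1 * c2 + s1 * s2) * (c1 * c2 + s1 * s2 + 1)) in Factor.
  assert (0 <= l4) by (unfold l4; assert (0 <= c1 * s2 <= 1) by (split; nra); nra).
  assert (0 <= b4) by (unfold b4; apply Rmult_le_pos; nra).
  cut (0 <= (rr x + x) * (ss x + x) - cc x * cc x); [lra|].
  apply (nonneg_of_scaled (den * den)); [nra|].
  rewrite Factor. apply Rmult_le_pos; nra.
Qed.

(* The reflected corner gap (r - x)(-s - x) - c^2 vanishes at x3_3. *)
Lemma low_gap_factor (x : R) :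
  den * den * ((rr x - x) * (- ss x - x) - cc x * cc x)
  = (den * x + num3)
    * (((1 - s1 * s2) * (1 + c1 * c2) - c1 * s2 * (c1 * s2)) * (den * x - num3)
       - (c1 * c2 - s1 * s2) * (c1 * c2 - s1 * s2 + 1) * den).
Proof. circle_nsatz. Qed.

(* Below x3_3 the corner a = 1, b = -1 is optimal; s + x <= 0 comes from the gap, the
   degenerate case r = x = 0 forcing c1 = s2 = 0. *)
Lemma low_cert (x : R) :
  -1 <= x -> den * x <= - num3 -> upper_cert (rr x) (ss x) x (cc x) (rr x - ss x - x).
Proof.
  intros Hx1 Hx.
  pose proof den_pos as Hden. pose proof num3_nn as H3.
  pose proof angles_bounds as (Hs1' & Hc1' & Hs2' & Hc2' & Hd & He).
  pose proof sum_angle_norm as Hsum.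
  pose proof (low_gap_factor x) as Factor.
  assert (Hx0 : x <= 0) by (clear - Hden H3 Hx; nra).
  destruct HA as [E1 E2 Hs1 Hc1 Hs2 Hc2 Hs21 Hc12 Hs1c2 Hs2c1].
  assert (Hr : 0 <= rr x).
  { assert (0 <= (1 + x) * (s1 * s2)) by (apply Rmult_le_pos; nra). unfold rr. lra. }
  assert (Hgap : cc x * cc x <= (rr x - x) * (- ss x - x)).
  { set (l3 := (1 - s1 * s2) * (1 + c1 * c2) - c1 * s2 * (c1 * s2)) in Factor.
    set (b3 := (c1 * c2 - s1 * s2) * (c1 * c2 - s1 * s2 + 1)) in Factor.
    assert (0 <= l3).
    { assert (E : l3 = 1 + (c1 * c2 - s1 * s2) - c1 * s2 * (c1 * s2 + s1 * c2))
        by (unfold l3; ring).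
      assert (0 <= c1 * s2 <= 1) by (split; nra).
      assert (0 <= c1 * s2 + s1 * c2 <= 1) by (split; nra).
      assert (c1 * s2 * (c1 * s2 + s1 * c2) <= 1) by nra.
      lra. }
    assert (0 <= b3) by (unfold b3; apply Rmult_le_pos; lra).
    cut (0 <= (rr x - x) * (- ss x - x) - cc x * cc x); [lra|].
    apply (nonneg_of_scaled (den * den)); [nra|].
    rewrite Factor.
    replace ((den * x + num3) * (l3 * (den * x - num3) - b3 * den))
      with ((- (den * x + num3)) * (l3 * (num3 - den * x) + b3 * den)) by ring.
    apply Rmult_le_pos; nra. }
  assert (Hsx : ss x + x <= 0).
  { destruct (Rle_lt_dec (ss x + x) 0) as [h | h]; [exact h | exfalso].
    assert (rr x - x <= 0) by (pose proof (Rle_0_sqr (cc x)); unfold Rsqr in *; nra).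
    assert (Hx' : x = 0) by lra.
    subst x. unfold rr, ss in *.
    assert (c1 * c2 = 0) by lra.
    assert (c1 = 0) by nra.
    assert (Hs2z : s2 = 0) by lra.
    assert (s1 * s2 = 0) by (rewrite Hs2z; ring).
    lra. }
  replace (rr x - ss x - x) with (rr x + - ss x + - x) by ring.
  apply upper_cert_reflect, upper_cert_corner; [lra | lra | lra |].
  replace (- x * - x) with (x * x) by ring. apply x_sq_le_coef_norm; lra.
Qed.

(* kk c2 - mm vanishes exactly at the two thresholds, so a* < 1 strictly between them. *)
Lemma tangent_slack (x : R) : (kk x * c2 - mm x) * den = (den * x + num3) * (num4 - den * x).
Proof. circle_nsatz. Qed.

(* kk c2 + mm is a nonnegative combination for |x| <= 1, so a* >= -1. *)
Lemma tangent_bound (x : R) :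
  2 * (kk x * c2 + mm x)
  = (1 + x) * ((c1 * c2 + s1 * s2) * (c2 * (1 - (c1 * c2 + s1 * s2)) + (s1 * c2 - c1 * s2) * s1))
    + (1 - x) * ((c1 * c2 - s1 * s2) * (c2 * (1 - (c1 * c2 - s1 * s2)) + (c1 * s2 + s1 * c2) * s1))
    + 2 * ((c2 * (c1 * c1 * s2 * s2 - 1 + c1 * c2) - c1 * s1 * s1 * s2 * s2) * (x * x - 1)).
Proof. circle_nsatz. Qed.

Lemma tangent_lower (x : R) : -1 <= x <= 1 -> 0 <= kk x * c2 + mm x.
Proof.
  intros Hx.
  pose proof angles_bounds as (Hs1' & Hc1' & Hs2' & Hc2' & Hd & He).
  pose proof sum_angle_norm as Hsum. pose proof diff_angle_norm as Hdiff.
  pose proof (tangent_bound x) as E.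
  destruct HA as [E1 E2 Hs1 Hc1 Hs2 Hc2 Hs21 Hc12 Hs1c2 Hs2c1].
  set (A := (c1 * c2 + s1 * s2) * (c2 * (1 - (c1 * c2 + s1 * s2)) + (s1 * c2 - c1 * s2) * s1)) in E.
  set (B := (c1 * c2 - s1 * s2) * (c2 * (1 - (c1 * c2 - s1 * s2)) + (c1 * s2 + s1 * c2) * s1)) in E.
  set (L := c2 * (c1 * c1 * s2 * s2 - 1 + c1 * c2) - c1 * s1 * s1 * s2 * s2) in E.
  assert (0 <= A).
  { assert (0 <= c1 * c2 + s1 * s2 <= 1) by (split; nra).
    assert (0 <= (s1 * c2 - c1 * s2) * s1) by (apply Rmult_le_pos; lra).
    assert (0 <= c2 * (1 - (c1 * c2 + s1 * s2))) by (apply Rmult_le_pos; lra).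
    unfold A. apply Rmult_le_pos; lra. }
  assert (0 <= B).
  { assert (0 <= c1 * s2 + s1 * c2) by nra.
    assert (c1 * c2 - s1 * s2 <= 1) by nra.
    assert (0 <= (c1 * s2 + s1 * c2) * s1) by (apply Rmult_le_pos; lra).
    assert (0 <= c2 * (1 - (c1 * c2 - s1 * s2))) by (apply Rmult_le_pos; lra).
    unfold B. apply Rmult_le_pos; lra. }
  assert (L <= 0).
  { assert (c1 * c1 * s2 * s2 <= s2 * s2) by nra.
    assert (c1 * c1 * s2 * s2 - 1 + c1 * c2 <= 0) by nra.
    assert (0 <= c1 * s1 * s1 * s2 * s2) by (repeat apply Rmult_le_pos; lra).
    unfold L. nra. }
  assert (0 <= (1 + x) * A) by (apply Rmult_le_pos; lra).
  assert (0 <= (1 - x) * B) by (apply Rmult_le_pos; lra).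
  assert (x * x <= 1) by nra.
  assert (0 <= (- L) * (1 - x * x)) by (apply Rmult_le_pos; lra).
  lra.
Qed.

Definition astar (x : R) : R := mm x / (kk x * c2).

Lemma mid_facts (x : R) :
  -1 <= x <= 1 -> - num3 < den * x -> den * x < num4 ->
  0 < s1 /\ 0 < kk x /\ 0 < cc x /\ -1 <= astar x <= 1.
Proof.
  intros Hx Hlo Hhi.
  pose proof den_pos as Hden. pose proof num4_le_num3 as H43. pose proof num3_le_den as H3d.
  pose proof (tangent_slack x) as Eslack. pose proof (tangent_lower x Hx) as Hlower.
  destruct HA as [E1 E2 Hs1 Hc1 Hs2 Hc2 Hs21 Hc12 Hs1c2 Hs2c1].
  assert (Hs1p : 0 < s1).
  { assert (num3 + num4 = 2 * (s1 * s1 * c2)) by (unfold num3, num4; ring).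
    destruct (Req_dec s1 0) as [Z | Z]; [rewrite Z in *; lra | lra]. }
  assert (Hx1 : x < 1) by (clear - Hden H43 H3d Hhi; nra).
  assert (Hup : 0 < kk x * c2 - mm x).
  { apply (Rmult_lt_reg_r den); [exact Hden|]. rewrite Rmult_0_l, Eslack.
    apply Rmult_lt_0_compat; lra. }
  assert (Hk : 0 < kk x) by (assert (0 < kk x * c2) by lra; nra).
  assert (Hc : 0 < cc x).
  { assert (E : cc x = (s1 * c2 - c1 * s2) + (1 - x) * (c1 * s2)) by (unfold cc; ring).
    assert (0 <= s1 * c2 - c1 * s2) by nra.
    destruct (Req_dec (c1 * s2) 0) as [Z | Z].
    - assert (0 < s1 * c2) by (apply Rmult_lt_0_compat; lra). rewrite E, Z. lra.
    - assert (0 < c1 * s2) by (assert (0 <= c1 * s2) by (apply Rmult_le_pos; lra); lra).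
      assert (0 < (1 - x) * (c1 * s2)) by (apply Rmult_lt_0_compat; lra). lra. }
  assert (Hkc : 0 < kk x * c2) by (apply Rmult_lt_0_compat; lra).
  repeat split; try lra; unfold astar.
  - apply (Rmult_le_reg_r (kk x * c2)); [exact Hkc|].
    replace (mm x / (kk x * c2) * (kk x * c2)) with (mm x) by (field; lra). lra.
  - apply (Rmult_le_reg_r (kk x * c2)); [exact Hkc|].
    replace (mm x / (kk x * c2) * (kk x * c2)) with (mm x) by (field; lra). lra.
Qed.

(* The middle gap is (1 - x^2) times a square vanishing at a*, ... *)
Lemma mid_gap (x a : R) :
  (nn x - rr x * a * kk x) * (nn x - rr x * a * kk x)
  - kk x * kk x * ((ss x + x * a) * (ss x + x * a) + cc x * cc x * (1 - a * a))
  = (1 - x * x) * (a * kk x * c2 - mm x) * (a * kk x * c2 - mm x).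
Proof. circle_nsatz. Qed.

(* ... and the slack of the bound at a* is c s1 / c2 > 0. *)
Lemma mid_tangent_value (x : R) : nn x * c2 - rr x * mm x = kk x * cc x * s1.
Proof. circle_nsatz. Qed.

Lemma mid_cert (x : R) :
  -1 <= x <= 1 -> - num3 < den * x -> den * x < num4 ->
  upper_cert (rr x) (ss x) x (cc x) (nn x / kk x) /\
  attained (rr x) (ss x) x (cc x) (nn x / kk x).
Proof.
  intros Hx Hlo Hhi.
  destruct (mid_facts x Hx Hlo Hhi) as (Hs1 & Hk & Hc & Ha).
  pose proof (c2_pos _ _ _ _ HA) as Hc2.
  assert (Gap : forall a,
    (nn x / kk x - rr x * a) * (nn x / kk x - rr x * a)
    - ((ss x + x * a) * (ss x + x * a) + cc x * cc x * (1 - a * a))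
    = (1 - x * x) * ((a - astar x) * c2) * ((a - astar x) * c2)).
  { intro a.
    transitivity (((nn x - rr x * a * kk x) * (nn x - rr x * a * kk x)
      - kk x * kk x * ((ss x + x * a) * (ss x + x * a) + cc x * cc x * (1 - a * a)))
      / (kk x * kk x)); [field; lra|].
    rewrite mid_gap. unfold astar. field. lra. }
  assert (Slack : nn x / kk x - rr x * astar x = cc x * s1 / c2).
  { unfold astar.
    replace (nn x / kk x - rr x * (mm x / (kk x * c2))) with ((nn x * c2 - rr x * mm x) / (kk x * c2))
      by (field; lra).
    rewrite mid_tangent_value. field. lra. }
  assert (HS : 0 < nn x / kk x - rr x * astar x).
  { rewrite Slack. apply Rdiv_lt_0_compat; [apply Rmult_lt_0_compat|]; lra. }
  assert (0 <= 1 - x * x) by nra.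
  split.
  - apply (upper_cert_tangent _ _ _ _ _ (astar x)); [lra | exact Ha | exact HS |].
    intro a. specialize (Gap a).
    assert (0 <= (1 - x * x) * ((a - astar x) * c2) * ((a - astar x) * c2)).
    { rewrite Rmult_assoc. apply Rmult_le_pos; [lra | apply Rle_0_sqr]. }
    lra.
  - apply (attained_tangent _ _ _ _ _ (astar x)); [lra | exact Ha | exact HS |].
    specialize (Gap (astar x)). rewrite Rminus_diag, !Rmult_0_l, Rmult_0_r in Gap. lra.
Qed.

(* The maximum nn / kk written as in the paper: (kk + nn) / (4 kk). *)
Lemma mid_value (x : R) : kk x + nn x = 2 * ((1 - x * x) * s1 * c2 * cc x).
Proof. circle_nsatz. Qed.

End AngleAlgebra.

Lemma le_div_iff (a b d : R) : 0 < d -> (a <= b / d <-> a * d <= b).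
Proof.
  intros Hd. split; intros H.
  - apply (Rmult_le_compat_r d) in H; [|lra].
    replace (b / d * d) with b in H by (field; lra). exact H.
  - apply (Rmult_le_reg_r d); [exact Hd|].
    replace (b / d * d) with b by (field; lra). exact H.
Qed.

Lemma div_le_iff (a b d : R) : 0 < d -> (b / d <= a <-> b <= a * d).
Proof.
  intros Hd. split; intros H.
  - apply (Rmult_le_compat_r d) in H; [|lra].
    replace (b / d * d) with b in H by (field; lra). exact H.
  - apply (Rmult_le_reg_r d); [exact Hd|].
    replace (b / d * d) with b by (field; lra). exact H.
Qed.

Lemma angles_of_range (g1 g2 : R) :
  0 <= g2 -> g2 <= g1 -> g1 + g2 <= PI / 2 -> angles (sin g1) (cos g1) (sin g2) (cos g2).
Proof.
  intros h1 h2 h3. pose proof PI_RGT_0.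
  pose proof (sin2_cos2 g1) as E1. pose proof (sin2_cos2 g2) as E2. unfold Rsqr in E1, E2.
  split; try lra.
  - apply sin_ge_0; lra.
  - apply cos_ge_0; lra.
  - apply sin_ge_0; lra.
  - apply cos_gt_0; lra.
  - apply sin_incr_1; lra.
  - apply cos_decr_1; lra.
  - rewrite <- (sin_shift g2). apply sin_incr_1; lra.
  - rewrite <- (sin_shift g1). apply sin_incr_1; lra.
Qed.

Section Thresholds.

Variables g1 g2 : R.

Local Notation ang q := (q (sin g1) (cos g1) (sin g2) (cos g2)).

Hypothesis HA : ang angles.

Lemma thresholds_eq :
  x3_3 g1 g2 = - ang num3 / ang den /\
  x3_4 g1 g2 = ang num4 / ang den.
Proof.
  pose proof (den_pos _ _ _ _ HA) as Hden. pose proof (c2_pos _ _ _ _ HA) as Hc2.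
  unfold x3_3, x3_4, x3_34, tan, den, num3, num4 in *.
  set (s1 := sin g1) in *. set (c1 := cos g1) in *. set (s2 := sin g2) in *. set (c2 := cos g2) in *.
  assert (E : 1 + c1 * (c2 - s2 * (c1 * s2 + s1 ^ 2 * (s2 / c2)))
              = (c2 + c1 * c2 * c2 - c1 * s2 * s2 * (c1 * c2 + s1 * s1)) / c2) by (field; lra).
  rewrite E. split; field; lra.
Qed.

Lemma thresholds_bounds :
  -1 <= x3_3 g1 g2 /\ x3_3 g1 g2 <= 0 /\ 0 <= x3_4 g1 g2 /\ x3_4 g1 g2 <= 1.
Proof.
  destruct thresholds_eq as [E3 E4]. rewrite E3, E4.
  pose proof (den_pos _ _ _ _ HA) as Hden.
  pose proof (num3_nn _ _ _ _ HA). pose proof (num3_le_den _ _ _ _ HA).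
  pose proof (num4_nn _ _ _ _ HA). pose proof (num4_le_num3 _ _ _ _ HA).
  repeat split; [apply le_div_iff | apply div_le_iff | apply le_div_iff | apply div_le_iff];
    try exact Hden; lra.
Qed.

Lemma g_low (x : R) :
  -1 <= x <= 1 -> x <= x3_3 g1 g2 ->
  g_is (rho g1 g2 x) ((1 - x) * (1 + cos (g1 + g2)) / 4).
Proof.
  intros Hx Hlow.
  pose proof (den_pos _ _ _ _ HA) as Hden.
  destruct thresholds_eq as [E3 _]. rewrite E3, le_div_iff in Hlow by exact Hden.
  replace ((1 - x) * (1 + cos (g1 + g2)) / 4) with
    ((1 + (ang rr x - ang ss x - x)) / 4)
    by (rewrite cos_plus; unfold rr, ss; field).
  apply g_is_criterion.
  - exact (tt_sq_le _ _ _ _ HA x Hx).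
  - apply (low_cert _ _ _ _ HA x); lra.
  - apply attained_corners.
Qed.

Lemma g_mid (x : R) :
  -1 <= x <= 1 -> x3_3 g1 g2 < x -> x < x3_4 g1 g2 ->
  g_is (rho g1 g2 x)
    ((1 - x ^ 2) * sin g1 * cos g2 * (cos g2 * sin g1 - x * cos g1 * sin g2) /
     (-2 * (x ^ 2 - (cos g2 * sin g1 - x * cos g1 * sin g2) ^ 2))).
Proof.
  intros Hx Hlow Hup.
  pose proof (den_pos _ _ _ _ HA) as Hden.
  destruct thresholds_eq as [E3 E4]. rewrite E3 in Hlow. rewrite E4 in Hup.
  assert (Hlow' : - ang num3 < ang den * x).
  { apply Rnot_le_lt. intro H. apply (Rlt_not_le _ _ Hlow). apply le_div_iff; lra. }
  assert (Hup' : ang den * x < ang num4).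
  { apply Rnot_le_lt. intro H. apply (Rlt_not_le _ _ Hup). apply div_le_iff; lra. }
  destruct (mid_facts _ _ _ _ HA x Hx Hlow' Hup') as (_ & Hk & _ & _).
  pose proof (mid_value _ _ _ _ HA x) as Evalue.
  destruct (mid_cert _ _ _ _ HA x Hx Hlow' Hup') as [Hcert Hatt].
  replace ((1 - x ^ 2) * sin g1 * cos g2 * (cos g2 * sin g1 - x * cos g1 * sin g2) /
     (-2 * (x ^ 2 - (cos g2 * sin g1 - x * cos g1 * sin g2) ^ 2)))
    with ((1 + ang nn x / ang kk x) / 4).
  - apply g_is_criterion; [exact (tt_sq_le _ _ _ _ HA x Hx) | exact Hcert | exact Hatt].
  - set (k := ang kk x) in *.
    set (n := ang nn x) in *.
    assert (Ek : x ^ 2 - (cos g2 * sin g1 - x * cos g1 * sin g2) ^ 2 = - k)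
      by (unfold k, kk, cc; ring).
    replace n with (2 * ((1 - x * x) * sin g1 * cos g2 * ang cc x) - k)
      by lra.
    rewrite Ek. unfold cc. field. lra.
Qed.

Lemma g_up (x : R) :
  -1 <= x <= 1 -> x3_4 g1 g2 <= x ->
  g_is (rho g1 g2 x) ((1 + x) * (1 + cos (g1 - g2)) / 4).
Proof.
  intros Hx Hup.
  pose proof (den_pos _ _ _ _ HA) as Hden.
  destruct thresholds_eq as [_ E4]. rewrite E4, div_le_iff in Hup by exact Hden.
  replace ((1 + x) * (1 + cos (g1 - g2)) / 4) with
    ((1 + (ang rr x + ang ss x + x)) / 4)
    by (rewrite cos_minus; unfold rr, ss; field).
  apply g_is_criterion.
  - exact (tt_sq_le _ _ _ _ HA x Hx).
  - apply (up_cert _ _ _ _ HA x); lra.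
  - apply attained_corners.
Qed.

End Thresholds.

Theorem mainTheorem3 (g1 g2 x3 : R) :
  0 <= g2 -> g2 <= g1 -> g1 <= PI / 2 -> g1 + g2 <= PI / 2 ->
  -1 <= x3 -> x3 <= 1 ->
  (-1 <= x3_3 g1 g2 /\ x3_3 g1 g2 <= 0 /\ 0 <= x3_4 g1 g2 /\ x3_4 g1 g2 <= 1) /\
  g_is (rho g1 g2 x3) (g_formula g1 g2 x3).
Proof.
  intros h1 h2 _ h4 hx1 hx2.
  pose proof (angles_of_range g1 g2 h1 h2 h4) as HA.
  split; [exact (thresholds_bounds g1 g2 HA)|].
  unfold g_formula.
  destruct (Rle_dec x3 (x3_3 g1 g2)) as [Hlow | Hlow].
  - exact (g_low g1 g2 HA x3 (conj hx1 hx2) Hlow).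
  - destruct (Rlt_dec x3 (x3_4 g1 g2)) as [Hup | Hup].
    + exact (g_mid g1 g2 HA x3 (conj hx1 hx2) (Rnot_le_lt _ _ Hlow) Hup).
    + exact (g_up g1 g2 HA x3 (conj hx1 hx2) (Rnot_lt_le _ _ Hup)).
Qed.
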